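(* Let $N\ge1$, let $J(x)$ be an $N\times N$ matrix whose entries are linear forms in $x\in\mathbb R^N$, let $H(x)=\tfrac12x^T\mathcal Hx$ be a quadratic form with constant symmetric $\mathcal H$, and let $f(x)=J(x)\nabla H(x)$. Let $\tilde x=\Phi_f(x,\varepsilon)$ be the Kahan map of $f$, and suppose $I-\varepsilon f'(x)$ and $I-\varepsilon J(x)\mathcal H$ are invertible. Then $$\tilde x-x=2\varepsilon\big(I-\varepsilon J(x)\mathcal H\big)^{-1}J\Big(\tfrac{x+\tilde x}{2}\Big)\nabla H(x),$$ and equivalently $$\tilde x=\big(I-\varepsilon J(x)\mathcal H\big)^{-1}\big(I+\varepsilon J(\tilde x)\mathcal H\big)x.$$
   Context: Kahan map: for a vector field $f$ on $\mathbb R^N$ whose components are homogeneous quadratic polynomials and a parameter $\varepsilon$, the Kahan map is $\Phi_f(x,\varepsilon)=\tilde x=x+2\varepsilon(I-\varepsilon f'(x))^{-1}f(x)=(I-\varepsilon f'(x))^{-1}x$, where $f'(x)$ is the Jacobi matrix of $f$ (defined wherever $I-\varepsilon f'(x)$ is invertible); it is the solution $\tilde x$ of $\frac{\tilde x-x}{2\varepsilon}=2f(\frac{x+\tilde x}{2})-\frac12f(x)-\frac12 f(\tilde x)$. *)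

From HB Require Import structures.
From mathcomp Require Import all_boot all_order all_algebra.
Set Implicit Arguments. Unset Strict Implicit. Unset Printing Implicit Defensive.
Import Order.TTheory GRing.Theory Num.Theory.
Local Open Scope ring_scope.

(* A homogeneous quadratic vector field f(x) = B(x,x) given by a bilinear map
   B (bilinearity is used only through the concrete B built below). *)

Definition basis_vec (R : nzRingType) {N : nat} (j : 'I_N) : 'cV[R]_N :=
  delta_mx j ord0.

(* Jacobi matrix of x |-> B x x : entry (i,j) = d/dx_j (B x x)_i
   = (B x e_j + B e_j x)_i. *)
Definition quad_jac (R : nzRingType) (N : nat)
  (B : 'cV[R]_N -> 'cV[R]_N -> 'cV[R]_N) (x : 'cV[R]_N) : 'M[R]_N :=
  \matrix_(i < N, j < N) (B x (basis_vec R j) + B (basis_vec R j) x) i ord0.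

Definition kahan (R : fieldType) (N : nat)
  (B : 'cV[R]_N -> 'cV[R]_N -> 'cV[R]_N) (eps : R) (x : 'cV[R]_N) : 'cV[R]_N :=
  invmx (1%:M - eps *: quad_jac B x) *m x.

Definition linJ (R : nzRingType) (N : nat) (Jk : 'I_N -> 'M[R]_N)
  (x : 'cV[R]_N) : 'M[R]_N :=
  \sum_(k < N) x k ord0 *: Jk k.

(* Bilinear map for f(x) = J(x) (Hm x) = J(x) grad H(x), H(x) = x^T Hm x / 2. *)
Definition poissonB (R : nzRingType) (N : nat) (Jk : 'I_N -> 'M[R]_N)
  (Hm : 'M[R]_N) (u v : 'cV[R]_N) : 'cV[R]_N :=
  linJ Jk u *m (Hm *m v).

From HB Require Import structures.
From mathcomp Require Import all_boot all_order all_algebra.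
Import Order.TTheory GRing.Theory Num.Theory.
Local Open Scope ring_scope.

(* For f(x) = J(x) H x the Jacobian acts by f'(x) y = J(x) H y + J(y) H x.
   Hence the Kahan equation (I - eps f'(x)) xt = x rearranges to
   (I - eps J(x) H) xt = (I + eps J(xt) H) x, which is the second identity;
   subtracting (I - eps J(x) H) x from both sides and using the linearity of J
   gives (I - eps J(x) H) (xt - x) = eps J(x + xt) H x, the first one. *)

Section LinearMatrix.
Variables (R : comNzRingType) (N : nat) (Jk : 'I_N -> 'M[R]_N).

Lemma linJ_basis j : linJ Jk (basis_vec R j) = Jk j.
Proof.
rewrite /linJ (bigD1 j) //= big1 => [|k kj].
  by rewrite /basis_vec mxE !eqxx scale1r addr0.
by rewrite /basis_vec mxE (negbTE kj) scale0r.
Qed.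

Lemma linJD u v : linJ Jk (u + v) = linJ Jk u + linJ Jk v.
Proof. by rewrite /linJ -big_split; apply: eq_bigr => k _; rewrite !mxE scalerDl. Qed.

Lemma linJZ a u : linJ Jk (a *: u) = a *: linJ Jk u.
Proof. by rewrite /linJ scaler_sumr; apply: eq_bigr => k _; rewrite !mxE scalerA. Qed.

Definition linJ_mx (w : 'cV[R]_N) : 'M[R]_N := \matrix_(i, j) (Jk j *m w) i ord0.

Lemma mul_linJ_mx w v : linJ_mx w *m v = linJ Jk v *m w.
Proof.
apply/matrixP => i k; rewrite (ord1 k) /linJ mulmx_suml !mxE summxE.
by apply: eq_bigr => j _; rewrite -scalemxAl !mxE mulrC.
Qed.

Variable Hm : 'M[R]_N.

Lemma quad_jac_poissonB x :
  quad_jac (poissonB Jk Hm) x = linJ Jk x *m Hm + linJ_mx (Hm *m x).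
Proof.
apply/matrixP => i j; rewrite !mxE /poissonB linJ_basis.
by congr (_ + _); apply: eq_bigr => k _; rewrite /basis_vec -colE mxE.
Qed.

Lemma mul_quad_jac_poissonB x y :
  quad_jac (poissonB Jk Hm) x *m y = linJ Jk x *m Hm *m y + linJ Jk y *m (Hm *m x).
Proof. by rewrite quad_jac_poissonB mulmxDl mul_linJ_mx. Qed.

End LinearMatrix.

Lemma kahanP {R : fieldType} {N : nat} {B : 'cV[R]_N -> 'cV[R]_N -> 'cV[R]_N}
    {eps x} :
  (1%:M - eps *: quad_jac B x) \in unitmx ->
  (1%:M - eps *: quad_jac B x) *m kahan B eps x = x.
Proof. by move=> hA; rewrite /kahan mulmxA mulmxV // mul1mx. Qed.

Section PoissonKahan.
Variables (R : fieldType) (N : nat) (Jk : 'I_N -> 'M[R]_N) (Hm : 'M[R]_N).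
Variables (eps : R) (x : 'cV[R]_N).
Hypothesis hjac : (1%:M - eps *: quad_jac (poissonB Jk Hm) x) \in unitmx.

Local Notation xt := (kahan (poissonB Jk Hm) eps x).
Local Notation A := (1%:M - eps *: (linJ Jk x *m Hm)).

Lemma poisson_kahan_implicit : A *m xt = (1%:M + eps *: (linJ Jk xt *m Hm)) *m x.
Proof.
have := kahanP hjac; rewrite mulmxBl mul1mx -scalemxAl mul_quad_jac_poissonB.
rewrite scalerDr opprD addrA => /eqP; rewrite subr_eq => /eqP kahan_eq.
by rewrite mulmxBl mul1mx -scalemxAl kahan_eq mulmxDl mul1mx -scalemxAl mulmxA.
Qed.

Lemma poisson_kahan_increment :
  A *m (xt - x) = eps *: (linJ Jk (x + xt) *m (Hm *m x)).
Proof.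
rewrite mulmxBr poisson_kahan_implicit mulmxBl mulmxDl !mul1mx -!scalemxAl.
by rewrite linJD mulmxDl scalerDr -!mulmxA opprB addrC addrA subrK.
Qed.

End PoissonKahan.

Theorem mainTheorem8 (R : realFieldType) (N : nat) (hN : (0 < N)%N)
  (Jk : 'I_N -> 'M[R]_N) (Hm : 'M[R]_N) (hsym : Hm^T = Hm)
  (eps : R) (x : 'cV[R]_N)
  (h1 : (1%:M - eps *: quad_jac (poissonB Jk Hm) x) \in unitmx)
  (h2 : (1%:M - eps *: (linJ Jk x *m Hm)) \in unitmx) :
  let xt := kahan (poissonB Jk Hm) eps x in
  xt - x = (2 * eps) *: (invmx (1%:M - eps *: (linJ Jk x *m Hm))
                          *m linJ Jk (2^-1 *: (x + xt)) *m (Hm *m x))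
  /\ xt = invmx (1%:M - eps *: (linJ Jk x *m Hm))
          *m (1%:M + eps *: (linJ Jk xt *m Hm)) *m x.
Proof.
move=> xt.
have invAK y : y = invmx (1%:M - eps *: (linJ Jk x *m Hm))
                   *m ((1%:M - eps *: (linJ Jk x *m Hm)) *m y).
  by rewrite mulmxA mulVmx // mul1mx.
split; last by rewrite -mulmxA -poisson_kahan_implicit.
rewrite [LHS]invAK poisson_kahan_increment // linJZ -!scalemxAr -scalemxAl.
by rewrite scalerA mulrAC divff ?mul1r ?pnatr_eq0 // mulmxA.
Qed.
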